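(* Let $R$ be a nonempty set of permutations and let $f(x),g(x)$ be formal power series (or polynomials) with $g$ invertible such that $$\sum_{n\ge0}|\mathfrak S_n(1243,2143,R)|x^n=1+x\frac{f(x)}{g(x)}.$$ Then $$\sum_{n\ge0}|\mathfrak S_n(1243,2143,Rn)|x^n=1+x\frac{g(x)}{(1-x)g(x)-xf(x)}.$$
   Context: $\mathfrak S_n(S)$ denotes the permutations of $\{1,\dots,n\}$ avoiding every pattern in $S$ (no subsequence with the same relative order as a pattern). $Rn$ is the set obtained by appending to each $\sigma\in R$ of length $m$ the entry $m+1$. *)

From HB Require Import structures.
From mathcomp Require Import all_boot all_algebra.
From mathcomp Require Import boolp.
Set Implicit Arguments. Unset Strict Implicit. Unset Printing Implicit Defensive.
Import GRing.Theory.

Definition is_perm (s : seq nat) : Prop := perm_eq s (iota 1 (size s)).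

Definition pattern_in (p s : seq nat) : Prop :=
  exists2 t : seq nat, subseq t s &
    (size t = size p /\
     forall i j, i < size p -> j < size p ->
       (nth 0 t i < nth 0 t j) = (nth 0 p i < nth 0 p j)).

Definition avoids_set (S : seq nat -> Prop) (s : seq nat) : Prop :=
  forall p, S p -> ~ pattern_in p s.

Definition av_count (S : seq nat -> Prop) (n : nat) : nat :=
  count (fun s => `[< avoids_set S s >]) (permutations (iota 1 n)).

Definition pats_1243_2143 (R : seq nat -> Prop) (p : seq nat) : Prop :=
  p = [:: 1; 2; 4; 3] \/ p = [:: 2; 1; 4; 3] \/ R p.

(* Rn : append m+1 to every sigma in R of length m. *)
Definition appendMax (R : seq nat -> Prop) (t : seq nat) : Prop :=
  exists2 s, R s & t = rcons s (size s).+1.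

(* Formal power series over K as coefficient functions. *)
Local Open Scope ring_scope.
Definition scst (K : fieldType) (c : K) : nat -> K :=
  fun n => if n is 0 then c else 0.
Definition sX (K : fieldType) : nat -> K := fun n => if n == 1%N then 1 else 0.
Definition sadd (K : fieldType) (a b : nat -> K) : nat -> K := fun n => a n + b n.
Definition ssub (K : fieldType) (a b : nat -> K) : nat -> K := fun n => a n - b n.
Definition smul (K : fieldType) (a b : nat -> K) : nat -> K :=
  fun n => \sum_(i < n.+1) a i * b (n - i)%N.
Definition sgf (K : fieldType) (a : nat -> nat) : nat -> K := fun n => (a n)%:R.

From mathcomp Require Import all_boot all_algebra.
From mathcomp Require Import boolp.
From mathcomp Require Import zify ring.
Set Implicit Arguments. Unset Strict Implicit. Unset Printing Implicit Defensive.

(* Write a permutation avoiding 1243 and 2143 as [al ++ n.+1 :: be] and let m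
   be the minimum of [al].  Every other entry of [al] exceeds every entry of
   [be], so the entries of [be] see only m among the smaller entries to their
   left.  Hence the permutation also avoids Rn iff [al] (standardized) avoids
   {1243, 2143} and R and [m :: be], a permutation of 1..|be|+1, avoids
   {1243, 2143} and Rn; conversely every such pair glues back uniquely.  With
   A(n), B(n) the numbers of permutations of length n avoiding {1243, 2143, R},
   resp. {1243, 2143, Rn}, counting by the position of n.+1 gives
   B(n+1) = B(n) + sum_(i < n) A(i+1) B(n-i), which is the stated identity of
   generating functions. *)

Lemma subseq_catE (T : eqType) (t s1 s2 : seq T) : subseq t (s1 ++ s2) ->
  exists t1 t2, [/\ t = t1 ++ t2, subseq t1 s1 & subseq t2 s2].
Proof.
case/subseqP=> m; rewrite size_cat => sz ->.
exists (mask (take (size s1) m) s1), (mask (drop (size s1) m) s2).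
by rewrite -mask_cat ?cat_take_drop ?mask_subseq ?size_takel ?sz ?leq_addr.
Qed.

Lemma subseq_mapE (S T : eqType) (f : S -> T) (t : seq T) (s : seq S) : subseq t (map f s) ->
  exists2 t', t = map f t' & subseq t' s.
Proof.
case/subseqP=> m; rewrite size_map => sz ->.
by exists (mask m s); rewrite ?map_mask ?mask_subseq.
Qed.

Lemma subseq_rconsE (T : eqType) (x0 : T) (t s : seq T) x : subseq (rcons t x) s ->
  exists2 q, q < size s & nth x0 s q = x /\ subseq t (take q s).
Proof.
elim: s t => [|y s IH] [|z t] //=.
- case: eqP => [-> _ | _ h]; first by exists 0.
  by have [q ? [? _]] := IH [::] h; exists q.+1.
- case: eqP => [-> /IH[q ? [? h]] | _ h]; first by exists q.+1; rewrite //= eqxx.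
  have [q ? [? {}h]] := IH (z :: t) h; exists q.+1 => //; split=> //.
  exact: subseq_trans h (subseq_cons _ _).
Qed.

Lemma subseq_rcons_nth (T : eqType) (x0 : T) (t s : seq T) q :
  q < size s -> subseq t (take q s) -> subseq (rcons t (nth x0 s q)) s.
Proof.
move=> hq ht; rewrite -[X in subseq _ X](cat_take_drop q s) (drop_nth x0 hq) -cats1.
by apply: cat_subseq; rewrite // sub1seq mem_head.
Qed.

Lemma subseq_pair (T : eqType) (s : seq T) a b : a \in s -> b \in s -> a != b ->
  subseq [:: a; b] s \/ subseq [:: b; a] s.
Proof.
elim: s => [|z s IH] //; rewrite !inE => ha hb nab.
have [eaz|naz] := eqVneq a z.
  subst z; left; rewrite /= eqxx sub1seq.
  by move: hb; rewrite (eq_sym b) (negbTE nab).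
have [ebz|nbz] := eqVneq b z.
  by subst z; right; rewrite /= eqxx sub1seq; move: ha; rewrite (negbTE nab).
rewrite (negbTE naz) in ha; rewrite (negbTE nbz) in hb.
by case: (IH ha hb nab) => h; [left|right]; apply: subseq_trans h (subseq_cons _ _).
Qed.

Lemma subseq_behead (x y : nat) (t s : seq nat) : x < y ->
  subseq (x :: t) (y :: s) -> subseq (x :: t) s.
Proof. by move=> xy; rewrite /= ifN // neq_ltn xy. Qed.

Lemma perm_iota1P (s : seq nat) n : perm_eq s (iota 1 n) ->
  [/\ uniq s, size s = n & forall x, (x \in s) = (0 < x <= n)].
Proof.
move=> p; rewrite (perm_uniq p) (perm_size p) iota_uniq size_iota.
by split=> // x; rewrite (perm_mem p) mem_iota add1n ltnS.
Qed.

Lemma perm_iota1 (s : seq nat) n : uniq s -> size s = n ->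
  (forall x, x \in s -> 0 < x <= n) -> perm_eq s (iota 1 n).
Proof.
move=> us sz h; have hsub : {subset s <= iota 1 n}.
  by move=> x /h; rewrite mem_iota add1n ltnS.
have [|_ e] := uniq_min_size us hsub; first by rewrite size_iota sz.
by apply: uniq_perm; rewrite ?iota_uniq.
Qed.

Lemma perm_iota1_downclosed (s : seq nat) : uniq s ->
  (forall y, y \in s -> 0 < y /\ forall v, 0 < v <= y -> v \in s) ->
  perm_eq s (iota 1 (size s)).
Proof.
move=> us h; apply: perm_iota1 => // y /h[y0 down]; rewrite y0 /=.
rewrite -[y](size_iota 1) uniq_leq_size ?iota_uniq // => v.
by rewrite mem_iota add1n ltnS; apply: down.
Qed.

(* An occurrence of 1243 or of 2143. *)
Definition has43 (s : seq nat) : Prop :=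
  exists a b c d, [/\ subseq [:: a; b; c; d] s, a < d, b < d & d < c].

Definition left_lower (s : seq nat) q := [seq x <- take q s | x < nth 0 s q].

Definition left_lower_avoid (R : seq nat -> Prop) s :=
  forall q, q < size s -> avoids_set R (left_lower s q).

Lemma left_lower_subseq s q : subseq (left_lower s q) s.
Proof. by rewrite /left_lower; apply: subseq_trans (filter_subseq _ _) (take_subseq _ _). Qed.

Lemma left_lower_catl s1 s2 q : q < size s1 -> left_lower (s1 ++ s2) q = left_lower s1 q.
Proof. by move=> hq; rewrite /left_lower take_cat nth_cat hq. Qed.

Definition avR (R : seq nat -> Prop) s := ~ has43 s /\ avoids_set R s.
(* For R a set of permutations, this is avoidance of 1243, 2143 and Rn
   ([avoids_pats_appendMaxE]). *)
Definition avRn (R : seq nat -> Prop) s := ~ has43 s /\ left_lower_avoid R s.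

Lemma pattern_in_subseq p s t : subseq s t -> pattern_in p s -> pattern_in p t.
Proof. by move=> st [u su h]; exists u => //; apply: subseq_trans su st. Qed.

Lemma avoids_subseq R s t : subseq s t -> avoids_set R t -> avoids_set R s.
Proof. by move=> st ht p Rp /(pattern_in_subseq st); apply: ht. Qed.

Lemma has43_subseq s t : subseq s t -> has43 s -> has43 t.
Proof.
by move=> st [a [b [c [d [su *]]]]]; exists a, b, c, d; split=> //; apply: subseq_trans su st.
Qed.

Lemma pattern_in4P (p : seq nat) s : size p = 4 -> pattern_in p s <->
  exists a b c d, subseq [:: a; b; c; d] s /\ forall i j, i < 4 -> j < 4 ->
    (nth 0 [:: a; b; c; d] i < nth 0 [:: a; b; c; d] j) = (nth 0 p i < nth 0 p j).
Proof.
move=> sz; split=> [[t st [szt h]]|[a [b [c [d [st h]]]]]].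
  rewrite sz in szt h *.
  case: t st szt h => [|a [|b [|c [|d [|? ?]]]]] //= st _ h.
  by exists a, b, c, d.
by exists [:: a; b; c; d]; rewrite ?sz.
Qed.

Lemma pattern_1243P s : pattern_in [:: 1; 2; 4; 3] s <->
  exists a b c d, [/\ subseq [:: a; b; c; d] s, a < b, b < d & d < c].
Proof.
rewrite pattern_in4P //; split=> [[a [b [c [d [st h]]]]]|[a [b [c [d [st *]]]]]].
  by exists a, b, c, d; rewrite (h 0 1) ?(h 1 3) ?(h 3 2).
by exists a, b, c, d; split=> // -[|[|[|[|i]]]] [|[|[|[|j]]]] /=; lia.
Qed.

Lemma pattern_2143P s : pattern_in [:: 2; 1; 4; 3] s <->
  exists a b c d, [/\ subseq [:: a; b; c; d] s, b < a, a < d & d < c].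
Proof.
rewrite pattern_in4P //; split=> [[a [b [c [d [st h]]]]]|[a [b [c [d [st *]]]]]].
  by exists a, b, c, d; rewrite (h 1 0) ?(h 0 3) ?(h 3 2).
by exists a, b, c, d; split=> // -[|[|[|[|i]]]] [|[|[|[|j]]]] /=; lia.
Qed.

Lemma has43E s : uniq s ->
  has43 s <-> pattern_in [:: 1; 2; 4; 3] s \/ pattern_in [:: 2; 1; 4; 3] s.
Proof.
move=> us; rewrite pattern_1243P pattern_2143P.
split=> [[a [b [c [d [st ad bd dc]]]]]|].
  have := subseq_uniq st us; rewrite /= !inE => /andP[/norP[ab _] _].
  by case: ltngtP ab => // [ab|ba] _; [left|right]; exists a, b, c, d.
by case=> -[a [b [c [d [st *]]]]]; exists a, b, c, d; split=> //; lia.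
Qed.

Lemma is_perm_nth_lt (s : seq nat) i : is_perm s -> i < size s -> nth 0 s i < (size s).+1.
Proof. by move=> /perm_mem ps /(mem_nth 0); rewrite ps mem_iota add1n => /andP[]. Qed.

Lemma pattern_in_rcons_maxE (sg s : seq nat) : is_perm sg ->
  pattern_in (rcons sg (size sg).+1) s <->
  exists2 q, q < size s & pattern_in sg (left_lower s q).
Proof.
move=> psg; have sg_lt := is_perm_nth_lt psg; split.
  case=> t; case/lastP: t => [|t e]; first by move=> _ [/eqP]; rewrite !size_rcons.
  rewrite !size_rcons => /(subseq_rconsE 0)[q hq [nth_q st]] [[szt] h].
  exists q => //; exists t; last first.
    split=> // i j hi hj; have := h i j (leqW hi) (leqW hj).
    by rewrite !nth_rcons szt hi hj.
  rewrite /left_lower subseq_filter st andbT nth_q.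
  apply/allP=> x /(nthP 0)[j hj <-]; rewrite szt in hj.
  by have := h j (size sg) (leqW hj) (ltnSn _); rewrite !nth_rcons szt hj ltnn eqxx sg_lt.
case=> q hq [t]; rewrite /left_lower subseq_filter => /andP[/allP t_lt st] [szt h].
exists (rcons t (nth 0 s q)); first exact: subseq_rcons_nth.
rewrite !size_rcons szt; split=> // i j.
have tq k : k < size sg -> nth 0 t k < nth 0 s q by move=> hk; rewrite t_lt ?mem_nth ?szt.
rewrite ltnS leq_eqVlt => /predU1P[->|hi]; rewrite ltnS leq_eqVlt => /predU1P[->|hj];
  rewrite !nth_rcons szt ?ltnn ?eqxx ?hi ?hj.
- by [].
- by rewrite ltnNge ltnW ?tq // ltnNge ltnW ?sg_lt.
- by rewrite tq ?sg_lt.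
- exact: h.
Qed.

Lemma avoids_patsE R s : uniq s -> avoids_set (pats_1243_2143 R) s <-> avR R s.
Proof.
move=> us; split=> [av|[n43 avR] p [->|[->|Rp]]].
- split=> [/(has43E us)[]|p Rp]; apply: av; rewrite /pats_1243_2143; tauto.
- by move=> h; apply: n43; apply/has43E => //; left.
- by move=> h; apply: n43; apply/has43E => //; right.
- exact: avR.
Qed.

Lemma avoids_pats_appendMaxE R s : uniq s -> (forall p, R p -> is_perm p) ->
  avoids_set (pats_1243_2143 (appendMax R)) s <-> avRn R s.
Proof.
move=> us permR; split=> [av|[n43 avRn] p [->|[->|[sg Rsg ->]]]].
- split=> [|q hq p Rp hp].
    by case/(has43E us); apply: av; rewrite /pats_1243_2143; tauto.
  apply: (av (rcons p (size p).+1)); first by right; right; exists p.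
  by apply/(pattern_in_rcons_maxE _ (permR _ Rp)); exists q.
- by move=> h; apply: n43; apply/has43E => //; left.
- by move=> h; apply: n43; apply/has43E => //; right.
- by case/(pattern_in_rcons_maxE _ (permR _ Rsg)) => q hq; apply: avRn.
Qed.

Section Relabel.
Variable f : nat -> nat.
Hypothesis f_mono : {mono f : x y / x < y}.

Lemma ltn_mono_inj : injective f.
Proof.
by move=> x y e; case: (ltngtP x y) => // h; [move: (f_mono x y) | move: (f_mono y x)];
  rewrite h e ltnn.
Qed.

Lemma pattern_in_map p s : pattern_in p (map f s) <-> pattern_in p s.
Proof.
split=> [[t /subseq_mapE[t' -> st'] [sz h]] | [t st [sz h]]].
  rewrite size_map in sz; exists t' => //; split=> // i j hi hj.
  by rewrite -h // !(nth_map 0) ?sz // f_mono.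
exists (map f t); rewrite ?map_subseq // size_map; split=> // i j hi hj.
by rewrite !(nth_map 0) ?sz // f_mono h.
Qed.

Lemma has43_map s : has43 (map f s) <-> has43 s.
Proof.
split=> [[a [b [c [d [/subseq_mapE[t' et st'] ad bd dc]]]]]|[a [b [c [d [st *]]]]]].
  case: t' et st' ad bd dc => [|a' [|b' [|c' [|d' [|? ?]]]]] //= [-> -> -> ->] st'.
  by rewrite !f_mono; exists a', b', c', d'.
by exists (f a), (f b), (f c), (f d); rewrite !f_mono (map_subseq f st).
Qed.

Lemma avoids_map R s : avoids_set R (map f s) <-> avoids_set R s.
Proof. by split=> h p Rp /pattern_in_map; apply: h. Qed.

Lemma avR_map R s : avR R (map f s) <-> avR R s.
Proof. by rewrite /avR has43_map avoids_map. Qed.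

End Relabel.

Lemma avoids_nil (R : seq nat -> Prop) : ~ R [::] -> avoids_set R [::].
Proof. by move=> nR p Rp [t]; rewrite subseq0 => /eqP-> [/esym/size0nil eq]; rewrite eq in Rp. Qed.

(* If x <= y, then m and x (in some order), then N, then y form an occurrence. *)
Lemma nonmin_gt_suffix (al be : seq nat) N m : uniq (al ++ N :: be) ->
  ~ has43 (al ++ N :: be) -> m \in al -> (forall x, x \in al -> m <= x) ->
  (forall y, y \in be -> y < N) ->
  forall x, x \in al -> x != m -> forall y, y \in be -> y < x.
Proof.
move=> us n43 m_al m_min N_max x x_al xm y y_be; rewrite ltnNge leq_eqVlt.
apply/negP=> /predU1P[exy|xy].
  move: us; rewrite cat_uniq => /and3P[_ /hasP[]]; exists y; rewrite ?inE ?y_be ?orbT //.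
  by rewrite -exy.
have mx : m < x by rewrite ltn_neqAle eq_sym xm m_min.
have sNy : subseq [:: N; y] (N :: be) by rewrite /= eqxx sub1seq.
case: (subseq_pair m_al x_al (negbT (ltn_eqF mx))) => h; apply: n43.
  by exists m, x, N, y; rewrite (cat_subseq h sNy) N_max // (ltn_trans mx xy).
by exists x, m, N, y; rewrite (cat_subseq h sNy) N_max // (ltn_trans mx xy).
Qed.

Section Decomposition.
Variables (R : seq nat -> Prop) (al be : seq nat) (N m : nat).
Hypotheses (us : uniq (al ++ N :: be)) (m_al : m \in al)
  (al_gt_be : forall x, x \in al -> x != m -> forall y, y \in be -> y < x)
  (N_max : forall x, x \in al ++ be -> x < N).

Let uniq_al : uniq al.
Proof. by move: us; rewrite cat_uniq => /andP[]. Qed.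

Let be_lt_N y : y \in be -> y < N.
Proof. by move=> y_be; rewrite N_max // mem_cat y_be orbT. Qed.

Let al_lt_N x : x \in al -> x < N.
Proof. by move=> x_al; rewrite N_max // mem_cat x_al. Qed.

Let below_be {x y} : x \in al -> y \in be -> x < y -> x = m.
Proof.
by move=> x_al y_be; apply: contraTeq => xm; rewrite -leqNgt ltnW // al_gt_be.
Qed.

Let in_be x : x \in N :: be -> x < N -> x \in be.
Proof. by rewrite inE => /predU1P[->|//]; rewrite ltnn. Qed.

Let le_N x : x \in N :: be -> x <= N.
Proof. by rewrite inE => /predU1P[->|/be_lt_N/ltnW]. Qed.

Lemma has43_catE : ~ has43 (al ++ N :: be) <-> ~ has43 al /\ ~ has43 (m :: be).
Proof.
split=> [n43|[n43_al n43_be] [a [b [c [d [st ad bd dc]]]]]].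
  split=> h; apply: n43; apply: has43_subseq h; first exact: prefix_subseq.
  by rewrite -cat1s cat_subseq ?sub1seq ?subseq_cons.
have two_al a' b' : subseq [:: a'; b'] al -> d \in be -> a' < d -> b' < d -> False.
  move=> st2 d_be ad' bd'; have in2 : {subset [:: a'; b'] <= al} := mem_subseq st2.
  have ea := below_be (in2 a' (mem_head _ _)) d_be ad'.
  have eb := below_be (in2 b' (mem_last a' [:: b'])) d_be bd'.
  by have := subseq_uniq st2 uniq_al; rewrite /= inE ea eb eqxx.
have [t1 [t2 [e s1 s2]]] := subseq_catE st.
have t2_le_N x : x \in t2 -> x <= N by move=> /(mem_subseq s2)/le_N.
case: t1 e s1 => [|a1 [|b1 [|c1 [|d1 [|? ?]]]]] /= e s1.
- subst t2; have cN : c <= N by apply: t2_le_N; rewrite !inE eqxx !orbT.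
  apply: n43_be; exists a, b, c, d; split=> //.
  by apply: subseq_trans (subseq_cons _ _); apply: subseq_behead s2; lia.
- case: e => ea et; subst a1 t2; have cN : c <= N by apply: t2_le_N; rewrite !inE eqxx !orbT.
  have s3 : subseq [:: b; c; d] be by apply: subseq_behead s2; lia.
  have d_be : d \in be by rewrite (mem_subseq s3) // !inE eqxx !orbT.
  have ea := below_be (mem_subseq s1 (mem_head _ _)) d_be ad; subst a.
  by apply: n43_be; exists m, b, c, d; rewrite /= eqxx.
- case: e => ea eb et; subst a1 b1 t2; have cN := t2_le_N c (mem_head _ _).
  apply: (two_al a b) => //; apply: in_be; last by lia.
  by rewrite (mem_subseq s2) // (mem_last c [:: d]).
- case: e => ea eb ec et; subst a1 b1 c1 t2.
  have cN : c < N by apply/al_lt_N/(mem_subseq s1); rewrite !inE eqxx !orbT.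
  apply: (two_al a b) => //; first by apply: subseq_trans s1; rewrite /= !eqxx.
  by apply: in_be; [rewrite (mem_subseq s2) ?mem_head | lia].
- by case: e => *; subst; apply: n43_al; exists a1, b1, c1, d1.
- by move/(congr1 size): e.
Qed.

Let filter_lt_al y : y \in be -> [seq x <- al | x < y] = [seq x <- [:: m] | x < y].
Proof.
move=> y_be; rewrite -(filter_pred1_uniq uniq_al m_al) -filter_predI.
apply: eq_in_filter => x x_al /=; have [->|xm] := eqVneq x m; first by rewrite andbT.
by rewrite andbF; apply/negbTE; rewrite -leqNgt ltnW // al_gt_be.
Qed.

Lemma left_lower_at_max : left_lower (al ++ N :: be) (size al) = al.
Proof.
rewrite /left_lower take_size_cat // nth_cat ltnn subnn /=.
by apply/all_filterP/allP => x /al_lt_N.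
Qed.

Lemma left_lower_after_max q : q < size be ->
  left_lower (al ++ N :: be) (size al + q.+1) = left_lower (m :: be) q.+1.
Proof.
move=> hq; rewrite /left_lower take_cat nth_cat ltnNge leq_addr /= addKn /=.
have y_be : nth 0 be q \in be := mem_nth 0 hq.
by rewrite filter_cat filter_lt_al //= [N < _]ltnNge (ltnW (be_lt_N y_be)); case: ifP.
Qed.

Lemma left_lower_avoid_catE : left_lower_avoid R (al ++ N :: be) <->
  avoids_set R al /\ left_lower_avoid R (m :: be).
Proof.
have sz : size (al ++ N :: be) = size al + (size be).+1 by rewrite size_cat.
split=> [h | [av_al h] q]; last rewrite sz.
  have av_al : avoids_set R al.
    by rewrite -left_lower_at_max; apply: h; rewrite sz -addSnnS leq_addr.
  split=> // -[|q] hq; first by apply: avoids_subseq av_al; rewrite sub0seq.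
  by rewrite -left_lower_after_max //; apply: h; rewrite sz ltn_add2l.
move=> hq; case: (ltngtP q (size al)) => [lt|gt|->]; last by rewrite left_lower_at_max.
  by rewrite left_lower_catl //; apply: avoids_subseq av_al; apply: left_lower_subseq.
have [q' eq] : exists q', q = size al + q'.+1 by exists (q - size al).-1; lia.
by rewrite eq left_lower_after_max; [apply: h | ]; move: hq; rewrite eq ltn_add2l.
Qed.

Lemma avRn_catE : avRn R (al ++ N :: be) <-> avR R al /\ avRn R (m :: be).
Proof. by rewrite /avRn /avR has43_catE left_lower_avoid_catE; tauto. Qed.

End Decomposition.

Lemma avRn_max_consE R N (be : seq nat) : ~ R [::] -> (forall y, y \in be -> y < N) ->
  avRn R (N :: be) <-> avRn R be.
Proof.
move=> nR be_lt_N.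
have ll q : q < size be -> left_lower (N :: be) q.+1 = left_lower be q.
  by move=> hq; rewrite /left_lower /= [N < _]ltnNge ltnW ?be_lt_N ?mem_nth.
have h43 : has43 (N :: be) <-> has43 be.
  split=> [[a [b [c [d [st ad bd dc]]]]]|]; last exact: has43_subseq (subseq_cons _ _).
  have : c \in N :: be by rewrite (mem_subseq st) // !inE eqxx !orbT.
  rewrite inE => /predU1P c_N; exists a, b, c, d; split=> //.
  by apply: subseq_behead st; case: c_N => [<-|/be_lt_N]; lia.
rewrite /avRn /left_lower_avoid h43.
split=> -[n43 h]; split=> // q hq; first by rewrite -ll //; apply: h.
by case: q hq => [_|q hq]; [apply: avoids_nil | rewrite ll //; apply: h].
Qed.

(* Fixing 0 keeps [relabel g k] increasing on all of nat. *)
Definition relabel (g k v : nat) := if v == 0 then 0 else if v == 1 then g else v.-1 + k.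
Definition unrelabel (g k w : nat) := if w == g then 1 else (w - k).+1.

(* Inverse of the decomposition [avRn_catE]: the minimum of the relabelled
   prefix is the first entry of [c] and its other entries exceed all of [c]. *)
Definition glue (N k : nat) (a c : seq nat) :=
  map (relabel (head 0 c) k) a ++ N :: behead c.

Lemma relabel_mono g k : 0 < g <= k -> {mono relabel g k : x y / x < y}.
Proof. by move=> /andP[g0 gk] [|[|x]] [|[|y]]; rewrite /relabel /=; lia. Qed.

Section Glue.
Variables (R : seq nat -> Prop) (n i : nat) (a c : seq nat).
Hypotheses (lt_in : i < n) (perm_a : perm_eq a (iota 1 i.+1))
  (perm_c : perm_eq c (iota 1 (n - i))).

Let k := n - i.
Let g := head 0 c.
Let al := map (relabel g k) a.

Let c_cons : c = g :: behead c.
Proof.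
have := perm_size perm_c; rewrite size_iota /g; case: (c) => //= e; exfalso; lia.
Qed.

Let mem_c y : (y \in c) = (0 < y <= k).
Proof. by have [_ _ ->] := perm_iota1P perm_c. Qed.

Let g_range : 0 < g <= k.
Proof. by rewrite -mem_c c_cons mem_head. Qed.

Let g_al : g \in al.
Proof. by apply/mapP; exists 1; rewrite ?(perm_mem perm_a) ?mem_iota. Qed.

Let al_nonmin x : x \in al -> x != g -> k < x <= n.
Proof.
case/mapP=> v; rewrite (perm_mem perm_a) mem_iota add1n ltnS => /andP[v0 vi] ->.
by case: v v0 vi => [|[|v]] //; rewrite /relabel /= ?eqxx // /k; lia.
Qed.

Let al_range x : x \in al -> 0 < x <= n.
Proof.
move=> x_al; have [->|xg] := eqVneq x g; last by have := al_nonmin x_al xg; lia.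
by move: g_range; rewrite /k; lia.
Qed.

Let tail_range y : y \in behead c -> 0 < y <= k.
Proof. by move=> y_c; rewrite -mem_c c_cons inE y_c orbT. Qed.

Let glue_uniq : uniq (al ++ n.+1 :: behead c).
Proof.
have [uc _ _] := perm_iota1P perm_c; have [ua _ _] := perm_iota1P perm_a.
rewrite c_cons cons_uniq in uc; case/andP: uc => g_tail u_tail.
have inj_relabel := ltn_mono_inj (relabel_mono g_range).
rewrite cat_uniq cons_uniq u_tail andbT (map_inj_uniq inj_relabel) ua /=.
apply/andP; split; last by apply/negP => /tail_range; rewrite /k; lia.
rewrite negb_or; apply/andP; split; first by apply/negP => /al_range; lia.
apply/hasPn => x x_tail; apply/negP => x_al.
have [xg|xg] := eqVneq x g; first by subst x; rewrite x_tail in g_tail.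
by have := al_nonmin x_al xg; have := tail_range x_tail; lia.
Qed.

Lemma glue_perm : perm_eq (glue n.+1 k a c) (iota 1 n.+1).
Proof.
apply: perm_iota1 glue_uniq _ _.
  rewrite size_cat size_map /= (perm_size perm_a) size_iota size_behead (perm_size perm_c).
  by rewrite size_iota /k; lia.
move=> x; rewrite mem_cat inE => /orP[/al_range|/predU1P[->|/tail_range]]; rewrite /k; lia.
Qed.

Lemma index_glue : index n.+1 (glue n.+1 k a c) = i.+1.
Proof.
rewrite /glue index_cat ifN; last by apply/negP => /al_range; lia.
by rewrite size_map (perm_size perm_a) size_iota /= eqxx addn0.
Qed.

Lemma glue_avRn : avR R a -> avRn R c -> avRn R (glue n.+1 k a c).
Proof.
move=> avR_a avRn_c; apply/(avRn_catE R glue_uniq g_al).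
- by move=> x x_al xg y /tail_range; have := al_nonmin x_al xg; lia.
- by move=> x; rewrite mem_cat => /orP[/al_range|/tail_range]; rewrite /k; lia.
by split; [apply/(avR_map (relabel_mono g_range)) | rewrite -c_cons].
Qed.

End Glue.

Lemma glue_inj n i a1 a2 c1 c2 : i < n ->
  perm_eq a1 (iota 1 i.+1) -> perm_eq a2 (iota 1 i.+1) ->
  perm_eq c1 (iota 1 (n - i)) -> perm_eq c2 (iota 1 (n - i)) ->
  glue n.+1 (n - i) a1 c1 = glue n.+1 (n - i) a2 c2 -> a1 = a2 /\ c1 = c2.
Proof.
move=> lt_in pa1 pa2 pc1 pc2; rewrite /glue => /eqP.
rewrite eqseq_cat ?size_map ?(perm_size pa1) ?(perm_size pa2) // => /andP[/eqP ea /eqP[et]].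
have [uc1 sc1 mc1] := perm_iota1P pc1; have [_ sc2 mc2] := perm_iota1P pc2; clear pc1 pc2.
have k0 : n - i != 0 by rewrite subn_eq0 -ltnNge.
case: c1 uc1 sc1 mc1 ea et => [|g1 t] /=; first by move=> _ /esym/eqP; rewrite (negbTE k0).
case: c2 sc2 mc2 => [|g2 t2] /=; first by move=> /esym/eqP; rewrite (negbTE k0).
move=> _ mc2 /andP[g1t _] _ mc1 ea et; subst t2.
have eg : g1 = g2.
  by move: (mem_head g1 t); rewrite mc1 -mc2 inE => /predU1P[|g1t'] //; rewrite g1t' in g1t.
subst g2; split=> //; apply: inj_map ea; apply: ltn_mono_inj; apply: relabel_mono.
by rewrite -mc1 mem_head.
Qed.

Section Split.
Variables (al be : seq nat) (n m : nat).
Hypotheses (perm_x : perm_eq (al ++ n.+1 :: be) (iota 1 n.+1))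
  (n43 : ~ has43 (al ++ n.+1 :: be)) (m_al : m \in al)
  (m_min : forall x, x \in al -> m <= x).

Let k := (size be).+1.

Let us : uniq (al ++ n.+1 :: be).
Proof. by have [] := perm_iota1P perm_x. Qed.

Let mem_x y : (y \in al ++ n.+1 :: be) = (0 < y <= n.+1).
Proof. by have [_ _ ->] := perm_iota1P perm_x. Qed.

Let disjoint_al y : y \in al -> (y \notin be) && (y != n.+1).
Proof.
move: us; rewrite cat_uniq => /and3P[_ /hasPn dis _] y_al.
by have := contraL (dis y) y_al; rewrite inE negb_or andbC.
Qed.

Let be_lt_N y : y \in be -> y < n.+1.
Proof.
move=> y_be; move: us; rewrite cat_uniq cons_uniq => /and4P[_ _ N_be _].
have : y <= n.+1 by have := mem_x y; rewrite mem_cat inE y_be !orbT => /esym/andP[].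
by rewrite leq_eqVlt => /predU1P[ey|//]; rewrite -ey y_be in N_be.
Qed.

Let al_gt_be := nonmin_gt_suffix us n43 m_al m_min be_lt_N.

Let al_range y : y \in al -> 0 < y < n.+1.
Proof.
move=> y_al; have /andP[_ yN] := disjoint_al y_al.
by have := mem_x y; rewrite mem_cat y_al => /esym/andP[-> /=]; rewrite ltn_neqAle yN.
Qed.

Lemma split_tail_perm : perm_eq (m :: be) (iota 1 k).
Proof.
have /andP[m_be _] := disjoint_al m_al.
have uniq_be : uniq be by move: us; rewrite cat_uniq cons_uniq => /and4P[].
have -> : k = size (m :: be) by [].
apply: perm_iota1_downclosed; first by rewrite /= m_be.
move=> y y_c; have y_lt : y < n.+1.
  by move: y_c; rewrite inE => /predU1P[->|/be_lt_N //]; have /andP[] := al_range m_al.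
have y_x : y \in al ++ n.+1 :: be.
  by move: y_c; rewrite mem_cat !inE => /predU1P[->|->]; rewrite ?m_al ?orbT.
split=> [|v /andP[v0 vy]]; first by move: y_x; rewrite mem_x => /andP[].
have : v \in al ++ n.+1 :: be by rewrite mem_x v0 (leq_trans vy (ltnW y_lt)).
rewrite mem_cat inE => /or3P[v_al|/eqP vN|v_be]; last by rewrite inE v_be orbT.
- have [->|vm] := eqVneq v m; first exact: mem_head.
  move: y_c; rewrite inE => /predU1P[ym|y_be].
    by move: vm; rewrite eqn_leq m_min // andbT -ym vy.
  by have := al_gt_be v_al vm y_be; lia.
- by rewrite vN in vy; lia.
Qed.

Lemma split_head_gt y : y \in al -> y != m -> k < y.
Proof.
move=> y_al ym; rewrite ltnNge; apply/negP => yk; have /andP[y0 _] := al_range y_al.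
have : y \in m :: be by rewrite (perm_mem split_tail_perm) mem_iota add1n ltnS yk y0.
by rewrite inE (negbTE ym) /=; apply/negP; case/andP: (disjoint_al y_al).
Qed.

Lemma relabel_unrelabel : map (relabel m k) (map (unrelabel m k) al) = al.
Proof.
rewrite -map_comp; apply: map_id_in => y y_al /=; rewrite /unrelabel.
have [->|ym] := eqVneq y m; first by rewrite /relabel.
have ky := split_head_gt y_al ym.
by rewrite /relabel /= eqSS subn_eq0 leqNgt ky /= subnK // ltnW.
Qed.

Lemma unrelabel_perm : perm_eq (map (unrelabel m k) al) (iota 1 (size al)).
Proof.
have sz : size al + k = n.+1.
  by rewrite -(size_iota 1 n.+1) -(perm_size perm_x) size_cat.
apply: perm_iota1; rewrite ?size_map //.
  apply: (@map_uniq _ _ (relabel m k)); rewrite relabel_unrelabel.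
  by move: us; rewrite cat_uniq => /andP[].
move=> _ /mapP[y y_al ->]; rewrite /unrelabel.
have [_|ym] := eqVneq y m; first by move: m_al; case: (al).
by have := split_head_gt y_al ym; have := al_range y_al; lia.
Qed.

Lemma split_avRn R : avRn R (al ++ n.+1 :: be) ->
  avR R (map (unrelabel m k) al) /\ avRn R (m :: be).
Proof.
have N_max y : y \in al ++ be -> y < n.+1.
  by rewrite mem_cat => /orP[/al_range/andP[]|/be_lt_N].
case/(avRn_catE R us m_al al_gt_be N_max) => avR_al avRn_c; split=> //.
have k_m : 0 < m <= k.
  by have := perm_mem split_tail_perm m; rewrite mem_head mem_iota add1n ltnS => <-.
by apply/(avR_map (relabel_mono k_m)); rewrite relabel_unrelabel.
Qed.

End Split.

Lemma avRn_split R n i x : i < n -> perm_eq x (iota 1 n.+1) -> avRn R x ->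
  index n.+1 x = i.+1 ->
  exists a c, [/\ perm_eq a (iota 1 i.+1), avR R a, perm_eq c (iota 1 (n - i)),
    avRn R c & x = glue n.+1 (n - i) a c].
Proof.
move=> lt_in perm_x avRn_x idx; have [_ sx mx] := perm_iota1P perm_x.
set al := take i.+1 x; set be := drop i.+2 x.
have ex : x = al ++ n.+1 :: be.
  have hj : i.+1 < size x by rewrite sx ltnS.
  rewrite /al /be -{1}(cat_take_drop i.+1 x) (drop_nth 0 hj).
  by rewrite -[in nth _ _ _]idx nth_index // mx leqnn.
have sz_al : size al = i.+1 by rewrite /al size_takel // sx ltnS ltnW.
have sz_be : (size be).+1 = n - i by rewrite /be size_drop sx; lia.
have al0 : 0 < size al by rewrite sz_al.
have [m m_al m_min] := ex_minnP (ex_intro (fun y => y \in al) _ (mem_nth 0 al0)).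
rewrite ex in perm_x avRn_x; have n43 : ~ has43 (al ++ n.+1 :: be) by case: avRn_x.
have [avR_a avRn_c] := split_avRn perm_x n43 m_al m_min avRn_x.
exists (map (unrelabel m (size be).+1) al), (m :: be).
rewrite -sz_be (split_tail_perm perm_x) // -{1}sz_al (unrelabel_perm perm_x) //.
by rewrite /glue /= (relabel_unrelabel perm_x).
Qed.

Lemma count_split_by (T : eqType) (P : pred T) (h : T -> nat) (L : seq T) N :
  (forall x, x \in L -> h x < N) ->
  count P L = \sum_(j < N) count (fun x => P x && (h x == j)) L.
Proof.
elim: L => [|x L IH] hL /=; first by rewrite big1.
rewrite big_split /= -IH => [|y yL]; last by apply: hL; rewrite inE yL orbT.
congr (_ + _); have hx : h x < N by apply: hL; rewrite mem_head.
rewrite (bigD1 (Ordinal hx)) //= eqxx andbT big1 ?addn0 // => j hj.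
by rewrite (_ : h x == j = false) ?andbF //; apply: contraNF hj => /eqP e; apply/eqP/val_inj.
Qed.

Lemma count_allpairs (T1 T2 T : eqType) (F : T1 -> T2 -> T) (P : pred T)
    (s : seq T) (s1 : seq T1) (s2 : seq T2) :
  uniq s -> uniq s1 -> uniq s2 ->
  (forall a1 a2 c1 c2, a1 \in s1 -> a2 \in s1 -> c1 \in s2 -> c2 \in s2 ->
     F a1 c1 = F a2 c2 -> (a1, c1) = (a2, c2)) ->
  (forall x, P x && (x \in s) = (x \in [seq F a c | a <- s1, c <- s2])) ->
  count P s = size s1 * size s2.
Proof.
move=> us us1 us2 injF memF; rewrite -size_filter -(size_allpairs F).
apply: perm_size; apply: uniq_perm => [||x]; last by rewrite mem_filter memF.
  exact: filter_uniq.
apply: allpairs_uniq => // -[a1 c1] [a2 c2] /allpairsP[[? ?] /= [h1 h2 [-> ->]]].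
by case/allpairsP => -[? ?] /= [h3 h4 [-> ->]]; apply: injF.
Qed.

Lemma count_map_inj (T1 T : eqType) (F : T1 -> T) (P : pred T) (s : seq T) (s1 : seq T1) :
  uniq s -> uniq s1 -> {in s1 &, injective F} ->
  (forall x, P x && (x \in s) = (x \in map F s1)) -> count P s = size s1.
Proof.
move=> us us1 injF memF; rewrite -size_filter -(size_map F).
apply: perm_size; apply: uniq_perm => [||x]; last by rewrite mem_filter memF.
  exact: filter_uniq.
by rewrite map_inj_in_uniq.
Qed.

Definition avR_count R n := count (fun s => `[< avR R s >]) (permutations (iota 1 n)).
Definition avRn_count R n := count (fun s => `[< avRn R s >]) (permutations (iota 1 n)).

Lemma av_count_avR R n : av_count (pats_1243_2143 R) n = avR_count R n.
Proof.
apply: eq_in_count => s; rewrite mem_permutations => /perm_iota1P[us _ _].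
exact/asbool_equiv_eq/avoids_patsE.
Qed.

Lemma av_count_avRn R n : (forall p, R p -> is_perm p) ->
  av_count (pats_1243_2143 (appendMax R)) n = avRn_count R n.
Proof.
move=> permR; apply: eq_in_count => s; rewrite mem_permutations => /perm_iota1P[us _ _].
exact/asbool_equiv_eq/avoids_pats_appendMaxE.
Qed.

Lemma avRn_count0 R : avRn_count R 0 = 1.
Proof.
rewrite /avRn_count (_ : permutations _ = [:: [::]]) //= addn0; apply/eqP; rewrite eqb1.
by apply/asboolP; split=> [[a [b [c [d []]]]]|].
Qed.

Lemma avR_count0 R : R [::] -> avR_count R 0 = 0.
Proof.
rewrite /avR_count (_ : permutations _ = [:: [::]]) //= addn0 => R0.
by apply/eqP; rewrite eqb0; apply/asboolP => -[_ /(_ _ R0)]; apply; exists [::].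
Qed.

Lemma avRn_count_max_first R n : ~ R [::] ->
  count (fun x => `[< avRn R x >] && (index n.+1 x == 0)) (permutations (iota 1 n.+1))
  = avRn_count R n.
Proof.
move=> nR; rewrite /avRn_count -[RHS]size_filter.
apply: (count_map_inj (F := cons n.+1)); rewrite ?filter_uniq ?permutations_uniq //.
  by move=> ? ? _ _ [].
move=> x; rewrite mem_permutations; apply/idP/idP.
  case/andP=> /andP[/asboolP avRn_x idx] /perm_iota1P[ux sx mx].
  case: x idx avRn_x ux sx mx => [|z be] //=; case: (z =P n.+1) => // -> _.
  move=> avRn_x /andP[N_be ub] [sb] mx.
  have be_lt y : y \in be -> y < n.+1.
    move=> y_be; have /andP[_ yN] : 0 < y <= n.+1 by rewrite -mx inE y_be orbT.
    by rewrite ltn_neqAle yN andbT; apply: contraNneq N_be => <-.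
  apply/mapP; exists be => //; rewrite mem_filter mem_permutations.
  rewrite (asboolT ((avRn_max_consE nR be_lt).1 avRn_x)) perm_iota1 // => y y_be.
  have /andP[-> _] : 0 < y <= n.+1 by rewrite -mx inE y_be orbT.
  by rewrite -ltnS be_lt.
case/mapP=> be; rewrite mem_filter mem_permutations => /andP[/asboolP avRn_be pb] ->.
have [ub sb mb] := perm_iota1P pb.
have be_lt y : y \in be -> y < n.+1 by rewrite mb => /andP[].
apply/andP; split; first by rewrite (asboolT ((avRn_max_consE nR be_lt).2 avRn_be)) /= eqxx.
apply: perm_iota1 => [|/=|y]; first by rewrite /= ub andbT; apply/negP => /be_lt; rewrite ltnn.
  by rewrite sb.
by rewrite inE => /predU1P[->|]; rewrite ?leqnn // mb => /andP[-> /leqW ->].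
Qed.

Lemma avRn_count_max_at R n i : i < n ->
  count (fun x => `[< avRn R x >] && (index n.+1 x == i.+1)) (permutations (iota 1 n.+1))
  = avR_count R i.+1 * avRn_count R (n - i).
Proof.
move=> lt_in; rewrite /avR_count /avRn_count -[X in _ = X * _]size_filter.
rewrite -[X in _ = _ * X]size_filter.
apply: (count_allpairs (F := glue n.+1 (n - i))); rewrite ?filter_uniq ?permutations_uniq //.
  move=> a1 a2 c1 c2; rewrite !mem_filter !mem_permutations.
  move=> /andP[_ pa1] /andP[_ pa2] /andP[_ pc1] /andP[_ pc2] e.
  by have [-> ->] := glue_inj lt_in pa1 pa2 pc1 pc2 e.
move=> x; rewrite mem_permutations; apply/idP/allpairsP.
  case/andP=> /andP[/asboolP avRn_x /eqP idx] px.
  have [a [c [pa avR_a pc avRn_c ->]]] := avRn_split lt_in px avRn_x idx.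
  by exists (a, c); rewrite !mem_filter !mem_permutations pa pc !asboolT.
case=> -[a c] /=; rewrite !mem_filter !mem_permutations.
case=> /andP[/asboolP avR_a pa] /andP[/asboolP avRn_c pc] ->.
by rewrite glue_perm // index_glue // eqxx andbT asboolT //; apply: glue_avRn.
Qed.

Lemma avRn_count_rec R n : ~ R [::] ->
  avRn_count R n.+1 = avRn_count R n + \sum_(i < n) avR_count R i.+1 * avRn_count R (n - i).
Proof.
move=> nR; rewrite {1}/avRn_count (@count_split_by _ _ (index n.+1) _ n.+1).
  rewrite big_ord_recl avRn_count_max_first //; congr (_ + _).
  by apply: eq_bigr => i _; rewrite lift0 avRn_count_max_at.
by move=> x; rewrite mem_permutations => /perm_iota1P[_ sx mx]; rewrite -{2}sx index_mem mx leqnn.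
Qed.

Section Series.
Variable K : fieldType.
Import GRing.Theory.
Local Open Scope ring_scope.

Definition trunc (a : nat -> K) n : {poly K} := \poly_(i < n.+1) a i.

Lemma coef_trunc (a : nat -> K) n i : (i <= n)%N -> (trunc a n)`_i = a i.
Proof. by move=> hi; rewrite coef_poly ltnS hi. Qed.

Lemma smul_coefM (a b : nat -> K) n (p q : {poly K}) :
  (forall i, (i <= n)%N -> p`_i = a i) -> (forall i, (i <= n)%N -> q`_i = b i) ->
  smul a b n = (p * q)`_n.
Proof.
move=> hp hq; rewrite coefM /smul; apply: eq_bigr => i _.
by rewrite hp ?hq ?leq_subr // -ltnS.
Qed.

Lemma smulA (a b c : nat -> K) : smul (smul a b) c = smul a (smul b c).
Proof.
apply/funext=> n; have tr d i : (i <= n)%N -> (trunc d n)`_i = d i := @coef_trunc d n i.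
have trM d e i : (i <= n)%N -> (trunc d n * trunc e n)`_i = smul d e i.
  by move=> hi; rewrite (@smul_coefM _ _ i (trunc d n) (trunc e n)) // => j hj;
    rewrite tr // (leq_trans hj hi).
by rewrite (smul_coefM (trM a b) (tr c)) (smul_coefM (tr a) (trM b c)) mulrA.
Qed.

Lemma smulBl (a b c : nat -> K) : smul (ssub a b) c = ssub (smul a c) (smul b c).
Proof. by apply/funext=> n; rewrite /smul /ssub -sumrB; apply: eq_bigr => i _; rewrite mulrBl. Qed.

Lemma smul1l (e : nat -> K) : smul (scst 1) e = e.
Proof.
apply/funext=> n; rewrite (@smul_coefM _ e n 1 (trunc e n)) ?mul1r ?coef_trunc //.
  by move=> [|i] _; rewrite coef1.
exact: coef_trunc.
Qed.

Lemma smulX (e : nat -> K) n : smul (sX K) e n = if n is m.+1 then e m else 0.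
Proof.
rewrite (@smul_coefM _ e n 'X (trunc e n)) ?coefXM => [|i _|i]; last exact: coef_trunc.
  by case: n => //= m; rewrite coef_trunc.
by rewrite coefX /sX; case: (i == 1)%N.
Qed.

(* With E = (B - 1) / x, the recurrence reads E = B + x F E where F = (A - 1) / x;
   together with B = 1 + x E this gives ((1 - x) - x F) E = 1. *)
Lemma gf_of_recurrence (a b : nat -> nat) (f g ginv : nat -> K) :
  b 0 = 1%N -> (forall n, b n.+1 = b n + \sum_(i < n) a i.+1 * b (n - i))%N ->
  smul g ginv = scst 1 -> sgf K a = sadd (scst 1) (smul (sX K) (smul f ginv)) ->
  exists dinv, smul (ssub (smul (ssub (scst 1) (sX K)) g) (smul (sX K) f)) dinv = scst 1 /\
    sgf K b = sadd (scst 1) (smul (sX K) (smul g dinv)).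
Proof.
move=> b0 b_rec hg hA; set E : nat -> K := fun n => (b n.+1)%:R; set F := smul f ginv.
have F_a i : F i = (a i.+1)%:R.
  by have := congr1 (fun h => h i.+1) hA; rewrite /sgf /sadd smulX add0r => ->.
have B_E : sgf K b = sadd (scst 1) (smul (sX K) E).
  by apply/funext=> -[|n]; rewrite /sgf /sadd smulX ?b0 ?addr0 ?add0r.
have E_rec : E = sadd (sgf K b) (smul (sX K) (smul F E)).
  apply/funext=> n; rewrite /E /sadd /sgf smulX b_rec natrD; congr (_ + _).
  case: n => [|m]; first by rewrite big_ord0.
  rewrite natr_sum; apply: eq_bigr => i _; rewrite natrM F_a /E subSn //.
  by rewrite -ltnS.
exists (smul ginv E); split.
  rewrite smulBl !smulA -(smulA g ginv E) hg smul1l -(smulA f ginv E) -/F smulBl smul1l.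
  apply/funext=> n; have := congr1 (fun h => h n) E_rec; have := congr1 (fun h => h n) B_E.
  by rewrite /ssub /sadd => eB eE; rewrite {1}eE eB; ring.
by rewrite -(smulA g ginv E) hg smul1l.
Qed.

End Series.

Theorem mainTheorem6 (K : fieldType) (R : seq nat -> Prop)
  (f g ginv : nat -> K) :
  (exists s, R s) ->
  (forall s, R s -> is_perm s) ->
  smul g ginv = scst (1 : K) ->
  sgf K (av_count (pats_1243_2143 R))
    = sadd (scst 1) (smul (sX K) (smul f ginv)) ->
  exists dinv : nat -> K,
    smul (ssub (smul (ssub (scst 1) (sX K)) g) (smul (sX K) f)) dinv = scst 1 /\
    sgf K (av_count (pats_1243_2143 (appendMax R)))
      = sadd (scst 1) (smul (sX K) (smul g dinv)).
Proof.
move=> _ permR hg hA.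
rewrite (_ : av_count _ = avR_count R) in hA; last exact/funext/av_count_avR.
rewrite (_ : av_count _ = avRn_count R); last by apply/funext => n; apply: av_count_avRn.
have nR : ~ R [::].
  move=> /avR_count0 R0; have := congr1 (fun h => h 0%N) hA.
  by rewrite /sgf /sadd smulX GRing.addr0 R0 => /esym/eqP; rewrite GRing.oner_eq0.
apply: gf_of_recurrence hg hA; first exact: avRn_count0.
by move=> n; apply: avRn_count_rec.
Qed.
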